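(* Let $\mathbb{I}>0$, $\xi>0$, and for $\ell>0$ let $g_\xi(\ell)=4\ell^2\int_0^\infty u^2\,\Phi\big(-\frac{u\ell\xi\sqrt{\mathbb{I}}}{2}\big)\phi(u)\,du$. Then $g_\xi$ is maximized at $\ell_{opt}=\frac{2.426}{\xi\sqrt{\mathbb{I}}}$ (constant to three decimals), and $$\alpha_{opt}=4\int_0^\infty\Phi\Big(-\frac{u\ell_{opt}\xi\sqrt{\mathbb{I}}}{2}\Big)\phi(u)\,du=0.439$$ up to three decimal places.
   Context: $\Phi,\phi$ are the standard normal cdf and density. $g_\xi$ is the diffusion speed of the limiting diffusion of additive TMCMC for independent, non-identically scaled targets $\prod_j\theta_j(d)f(\theta_j(d)x_j)$, where $\mathbb{I}=E_f[(f'/f)^2]$ and $\xi$ is a limiting constant determined by the scalings. *)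

From Stdlib Require Import Reals.
From Coquelicot Require Import Coquelicot.
Open Scope R_scope.

Definition phi (x : R) : R := exp (- x ^ 2 / 2) / sqrt (2 * PI).

Definition Phi (x : R) : R := RInt_gen phi (Rbar_locally m_infty) (at_point x).

Definition g_speed (I xi l : R) : R :=
  4 * l ^ 2 * RInt_gen (fun u => u ^ 2 * Phi (- (u * l * xi * sqrt I) / 2) * phi u)
                       (at_point 0) (Rbar_locally p_infty).

Definition alpha_acc (I xi l : R) : R :=
  4 * RInt_gen (fun u => Phi (- (u * l * xi * sqrt I) / 2) * phi u)
               (at_point 0) (Rbar_locally p_infty).

Definition is_max_speed (I xi l : R) : Prop :=
  0 < l /\ forall l', 0 < l' -> g_speed I xi l' <= g_speed I xi l.

From Stdlib Require Import Reals Lra Lia Psatz.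
From Coquelicot Require Import Coquelicot.
Open Scope R_scope.

(* With [s = xi * sqrt I] and [a = l s / 2], both integrals are elementary.  Since
   [phi (- a u) * phi u = exp (- (1 + a^2) u^2 / 2) / (2 PI)], differentiating under the
   integral sign in [a] gives, on [[0, B]], an antiderivative in [a] up to an error
   [O(exp (- B^2 / 2))]; comparing with the parameter value [a = B], where the integral is
   [O(1/B)], yields
     int_0^oo Phi (- a u) phi u du = 1/4 - atan a / (2 PI),
     int_0^oo u^2 Phi (- a u) phi u du = 1/4 - (atan a + a / (1 + a^2)) / (2 PI).
   Hence [g_xi l = 8 / (PI s^2) * a^2 (PI/2 - atan a - a / (1 + a^2))], whose [a]-derivative is
   [2 a m(a)] with [m] decreasing on [[0, 1.7]] and negative beyond.  Enclosures of [atan] by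
   its alternating Taylor polynomials locate the sign change of [m] in a short interval, which
   pins down [l s = 2 a] and [alpha = 1 - 2 atan a / PI] to the stated precision. *)

(* Coquelicot states equations at types that only reduce to [R]; make them visible to [ring]. *)
Ltac as_R_eq := match goal with |- ?a = ?b => change (@eq R a b) end.

Lemma is_derive_ext_val (f g : R -> R) x l l' :
  is_derive f x l -> (forall t, f t = g t) -> l = l' -> is_derive g x l'.
Proof. intros H E <-. exact (is_derive_ext f g x l E H). Qed.

Lemma is_derive_atan_pow2 a : is_derive atan a (/ (1 + a ^ 2)).
Proof. replace (a ^ 2) with (a²) by (unfold Rsqr; ring). apply is_derive_atan. Qed.

Lemma continuous_of_derive (f df : R -> R) x :
  (forall t, is_derive f t (df t)) -> continuous f x.
Proof. intros H. apply (@ex_derive_continuous R_AbsRing R_NormedModule). eexists; apply H. Qed.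

Lemma MVT_derive (f df : R -> R) a b : a < b -> (forall t, is_derive f t (df t)) ->
  exists c, a <= c <= b /\ f b - f a = df c * (b - a).
Proof.
  intros Hab H. destruct (MVT_gen f a b df) as [c [Hc E]].
  - intros; apply H.
  - intros; apply continuity_pt_filterlim; eapply continuous_of_derive; eauto.
  - rewrite Rmin_left, Rmax_right in Hc by lra. eauto.
Qed.

(** * Alternating Taylor enclosures of atan *)

Lemma pow_m1_sqr n : (-1) ^ n * (-1) ^ n = 1.
Proof. rewrite <- Rpow_mult_distr. replace (-1 * -1) with 1 by ring. apply pow1. Qed.

Lemma is_derive_monomial_primitive (c : R) k x :
  is_derive (fun x => c * x ^ S k / INR (S k)) x (c * x ^ k).
Proof.
  auto_derive; [easy|]. rewrite <- S_INR.
  destruct k; [simpl; field|]. field. apply not_0_INR. lia.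
Qed.

Fixpoint atan_taylor (n : nat) (x : R) : R :=
  match n with
  | O => x
  | S m => atan_taylor m x + (-1) ^ n * x ^ (2 * n + 1) / INR (2 * n + 1)
  end.

Fixpoint alt_geom_sum (n : nat) (x : R) : R :=
  match n with
  | O => 1
  | S m => alt_geom_sum m x + (-1) ^ n * x ^ (2 * n)
  end.

Lemma atan_taylor_0 n : atan_taylor n 0 = 0.
Proof.
  induction n as [|n IH]; [reflexivity|].
  cbn [atan_taylor]. rewrite IH, pow_i by lia. unfold Rdiv. ring.
Qed.

Lemma is_derive_atan_taylor n x : is_derive (atan_taylor n) x (alt_geom_sum n x).
Proof.
  induction n as [|n IH].
  - simpl. auto_derive; [easy|ring].
  - apply (is_derive_plus (atan_taylor n)
             (fun x => (-1) ^ S n * x ^ (2 * S n + 1) / INR (2 * S n + 1))); auto.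
    replace (2 * S n + 1)%nat with (S (2 * S n)) by lia. apply is_derive_monomial_primitive.
Qed.

Lemma alt_geom_sum_closed n x :
  (1 + x ^ 2) * alt_geom_sum n x = 1 - (-1) ^ S n * x ^ (2 * S n).
Proof.
  induction n as [|n IH]; [simpl; ring|].
  cbn [alt_geom_sum]. rewrite Rmult_plus_distr_l, IH.
  replace (2 * S (S n))%nat with (2 * S n + 2)%nat by lia.
  rewrite pow_add. change ((-1) ^ S (S n)) with ((-1) * (-1) ^ S n). ring.
Qed.

(* The error vanishes at 0 and its signed derivative is [x^(2n+2) / (1 + x^2) >= 0]. *)
Lemma atan_taylor_error_sign n x : 0 <= x -> 0 <= (-1) ^ n * (atan_taylor n x - atan x).
Proof.
  intros Hx.
  set (D := fun t => (-1) ^ n * (atan_taylor n t - atan t)).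
  set (dD := fun t => (-1) ^ n * (alt_geom_sum n t - / (1 + t ^ 2))).
  assert (HD : forall t, is_derive D t (dD t)).
  { intros t. exact (is_derive_scal _ t ((-1) ^ n) _
      (is_derive_minus _ _ _ _ _ (is_derive_atan_taylor n t) (is_derive_atan_pow2 t))). }
  destruct (Req_dec x 0) as [->|Hx0].
  { unfold D. rewrite atan_0, atan_taylor_0. lra. }
  destruct (MVT_derive D dD 0 x ltac:(lra) HD) as [c [Hc E]].
  assert (HdD : 0 <= dD c).
  { assert (H1 : 0 < 1 + c ^ 2) by (pose proof (pow2_ge_0 c); lra).
    replace (dD c) with (((-1) ^ n * (-1) ^ n) * (c ^ 2) ^ S n / (1 + c ^ 2)).
    - rewrite pow_m1_sqr, Rmult_1_l. apply Rdiv_le_0_compat; [|lra].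
      apply pow_le, pow2_ge_0.
    - unfold dD. rewrite <- pow_mult.
      replace (alt_geom_sum n c) with ((1 - (-1) ^ S n * c ^ (2 * S n)) / (1 + c ^ 2))
        by (rewrite <- alt_geom_sum_closed; field; lra).
      change ((-1) ^ S n) with (-1 * (-1) ^ n). field. lra. }
  assert (D0 : D 0 = 0) by (unfold D; rewrite atan_0, atan_taylor_0; ring).
  change (0 <= D x). nra.
Qed.

Lemma atan_le_taylor_even k x : 0 <= x -> atan x <= atan_taylor (2 * k) x.
Proof.
  intros Hx. pose proof (atan_taylor_error_sign (2 * k) x Hx) as H.
  rewrite pow_mult in H. replace ((-1) ^ 2) with 1 in H by ring. rewrite pow1 in H. lra.
Qed.

Lemma atan_ge_taylor_odd k x : 0 <= x -> atan_taylor (2 * k + 1) x <= atan x.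
Proof.
  intros Hx. pose proof (atan_taylor_error_sign (2 * k + 1) x Hx) as H.
  rewrite pow_add, pow_mult in H. replace ((-1) ^ 2) with 1 in H by ring.
  rewrite pow1 in H. lra.
Qed.

Lemma PI_bounds : 314 / 100 <= PI <= 3142 / 1000.
Proof.
  pose proof Machin_2_3.
  pose proof (atan_ge_taylor_odd 3 (/ 2) ltac:(lra)).
  pose proof (atan_ge_taylor_odd 3 (/ 3) ltac:(lra)).
  pose proof (atan_le_taylor_even 2 (/ 2) ltac:(lra)).
  pose proof (atan_le_taylor_even 2 (/ 3) ltac:(lra)).
  simpl in *. lra.
Qed.

(* Reduces the argument so that a few Taylor terms suffice for 5 correct digits. *)
Lemma atan_shift_half x : 0 <= x <= 1 ->
  atan x = atan (/ 2) + atan ((x - / 2) / (1 + x * / 2)).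
Proof.
  intros Hx. apply atan_sub_correct; [nra | apply tech; lra | apply atan_bound].
Qed.

Lemma atan_enclosure x : / 2 <= x <= 1 ->
  let y := (x - / 2) / (1 + x * / 2) in
  atan_taylor 7 (/ 2) + atan_taylor 3 y <= atan x <= atan_taylor 8 (/ 2) + atan_taylor 4 y.
Proof.
  intros Hx y. assert (Hy : 0 <= y) by (apply Rdiv_le_0_compat; lra).
  rewrite (atan_shift_half x) by lra. fold y.
  pose proof (atan_le_taylor_even 4 (/ 2) ltac:(lra)).
  pose proof (atan_ge_taylor_odd 3 (/ 2) ltac:(lra)).
  pose proof (atan_le_taylor_even 2 y Hy). pose proof (atan_ge_taylor_odd 1 y Hy).
  simpl in *. lra.
Qed.

(* The sign change of the derivative of the speed profile is located in [[a_lo, a_hi]];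
   [2 a_lo = 2.42571...] and [2 a_hi = 2.42647...]. *)
Definition a_lo := 2000 / 1649.
Definition a_hi := 12500 / 10303.

Lemma atan_inv_a_hi :
  let x := / a_hi in
  689347 / 1000000 <= atan x /\ atan x - x / (1 + x ^ 2) - x ^ 3 / (1 + x ^ 2) ^ 2 < 0.
Proof.
  intros x. replace x with (10303 / 12500) by (unfold x, a_hi; field).
  pose proof (atan_enclosure (10303 / 12500) ltac:(lra)). simpl in *. lra.
Qed.

Lemma atan_inv_a_lo :
  let x := / a_lo in
  atan x <= 689503 / 1000000 /\ 0 < atan x - x / (1 + x ^ 2) - x ^ 3 / (1 + x ^ 2) ^ 2.
Proof.
  intros x. replace x with (1649 / 2000) by (unfold x, a_lo; field).
  pose proof (atan_enclosure (1649 / 2000) ltac:(lra)). simpl in *. lra.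
Qed.

(** * The standard normal density and distribution function *)

Lemma RInt_correct_R (f : R -> R) a b : ex_RInt f a b -> is_RInt f a b (RInt f a b).
Proof. apply (RInt_correct (V := R_CompleteNormedModule)). Qed.

Lemma is_RInt_unique_R (f : R -> R) a b l : is_RInt f a b l -> RInt f a b = l.
Proof. apply (is_RInt_unique (V := R_CompleteNormedModule)). Qed.

Lemma ex_RInt_continuous_R (f : R -> R) a b :
  (forall z, Rmin a b <= z <= Rmax a b -> continuous f z) -> ex_RInt f a b.
Proof. apply (ex_RInt_continuous (V := R_CompleteNormedModule)). Qed.

Lemma continuous_mult_R (f g : R -> R) x :
  continuous f x -> continuous g x -> continuous (fun t => f t * g t) x.
Proof. apply (@continuous_mult R_UniformSpace R_AbsRing). Qed.

Lemma RInt_derive_R (F f : R -> R) a b :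
  (forall t, is_derive F t (f t)) -> (forall t, continuous f t) -> RInt f a b = F b - F a.
Proof. intros H1 H2. apply is_RInt_unique_R, (is_RInt_derive F f); auto. Qed.

Lemma exp_le_compat x y : x <= y -> exp x <= exp y.
Proof. intros [H| ->]; [left; apply exp_increasing; auto | lra]. Qed.

Lemma sqrt_2PI_bounds : 2 <= sqrt (2 * PI) /\ exp (1 / 2) <= sqrt (2 * PI).
Proof.
  pose proof PI_bounds as HPI. split.
  - apply Rle_trans with (sqrt (2 * 2)); [rewrite sqrt_square | apply sqrt_le_1_alt]; lra.
  - rewrite <- (sqrt_square (exp (1 / 2))) by (left; apply exp_pos).
    apply sqrt_le_1_alt. rewrite <- exp_plus.
    replace (1 / 2 + 1 / 2) with 1 by field. pose proof exp_le_3. lra.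
Qed.

Lemma phi_pos x : 0 < phi x.
Proof.
  apply Rdiv_lt_0_compat; [apply exp_pos|]. pose proof sqrt_2PI_bounds. lra.
Qed.

Lemma continuous_phi x : continuous phi x.
Proof.
  apply (@ex_derive_continuous R_AbsRing R_NormedModule). unfold phi. auto_derive.
  pose proof sqrt_2PI_bounds. lra.
Qed.

Lemma phi_le_exp x : phi x <= exp x.
Proof.
  destruct sqrt_2PI_bounds as [H2 He]. unfold phi.
  apply Rle_div_l; [lra|].
  apply Rle_trans with (exp x * exp (1 / 2)).
  - rewrite <- exp_plus. apply exp_le_compat. pose proof (pow2_ge_0 (x + 1)). nra.
  - apply Rmult_le_compat_l; [left; apply exp_pos | exact He].
Qed.

Lemma pow2_exp_le x : x ^ 2 * exp (- x ^ 2 / 2) <= 2.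
Proof.
  pose proof (exp_ineq1_le (x ^ 2 / 2)). pose proof (pow2_ge_0 x).
  assert (E : exp (- x ^ 2 / 2) * exp (x ^ 2 / 2) = 1).
  { rewrite <- exp_plus, <- exp_0. f_equal. field. }
  pose proof (exp_pos (- x ^ 2 / 2)). nra.
Qed.

Lemma phi_le_1 x : phi x <= 1.
Proof.
  destruct sqrt_2PI_bounds as [H2 _]. unfold phi. apply Rle_div_l; [lra|].
  assert (exp (- x ^ 2 / 2) <= exp 0) by (apply exp_le_compat; nra).
  rewrite exp_0 in *. lra.
Qed.

Lemma pow2_mul_phi_le_1 x : x ^ 2 * phi x <= 1.
Proof.
  destruct sqrt_2PI_bounds as [H2 _]. pose proof (pow2_exp_le x). unfold phi.
  unfold Rdiv. rewrite <- Rmult_assoc. apply Rle_div_l; lra.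
Qed.

Lemma phi_mul_phi a u : phi (- (a * u)) * phi u = exp (- (1 + a ^ 2) * u ^ 2 / 2) / (2 * PI).
Proof.
  unfold phi. destruct sqrt_2PI_bounds as [H2 _].
  replace (- (1 + a ^ 2) * u ^ 2 / 2) with (- (- (a * u)) ^ 2 / 2 + - u ^ 2 / 2) by field.
  rewrite exp_plus.
  transitivity (exp (- (- (a * u)) ^ 2 / 2) * exp (- u ^ 2 / 2) / (sqrt (2 * PI) * sqrt (2 * PI))).
  - field. lra.
  - rewrite sqrt_sqrt; [reflexivity | pose proof PI_RGT_0; lra].
Qed.

Lemma ex_RInt_phi a b : ex_RInt phi a b.
Proof. apply ex_RInt_continuous_R. intros; apply continuous_phi. Qed.

Lemma RInt_phi_bounds a b : a <= b -> 0 <= RInt phi a b <= exp b - exp a.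
Proof.
  intros Hab. split.
  - apply RInt_ge_0; auto using ex_RInt_phi. intros; left; apply phi_pos.
  - rewrite <- (RInt_derive_R exp exp a b); auto using is_derive_exp, continuous_exp.
    apply RInt_le; auto using ex_RInt_phi, phi_le_exp.
    apply ex_RInt_continuous_R. intros; apply continuous_exp.
Qed.

Lemma Rabs_RInt_phi_le a1 a2 x : a1 < x -> a2 < x ->
  Rabs (RInt phi a2 x - RInt phi a1 x) <= exp (Rmax a1 a2).
Proof.
  intros H1 H2.
  assert (E : RInt phi a2 x - RInt phi a1 x = RInt phi a2 a1).
  { rewrite <- (RInt_Chasles phi a2 a1 x) by apply ex_RInt_phi. unfold plus; simpl. ring. }
  rewrite E.
  destruct (Rle_dec a2 a1) as [Ha|Ha].
  - pose proof (RInt_phi_bounds a2 a1 Ha). pose proof (exp_pos a2).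
    rewrite Rmax_left, Rabs_pos_eq; lra.
  - rewrite <- (opp_RInt_swap phi a1 a2) by apply ex_RInt_phi.
    pose proof (RInt_phi_bounds a1 a2 ltac:(lra)). pose proof (exp_pos a1).
    change (opp (RInt phi a1 a2)) with (- RInt phi a1 a2).
    rewrite Rmax_right, Rabs_Ropp, Rabs_pos_eq; lra.
Qed.

(* Cauchy criterion at [-oo]: the tails of [phi] are dominated by [exp]. *)
Lemma ex_RInt_gen_phi x : ex_RInt_gen phi (Rbar_locally m_infty) (at_point x).
Proof.
  unfold ex_RInt_gen, is_RInt_gen.
  apply (@filterlimi_locally_cauchy (R * R) R_CompleteSpace
           (filter_prod (Rbar_locally m_infty) (at_point x)) _).
  - apply filter_forall. intros ab. split.
    + exists (RInt phi (fst ab) (snd ab)). apply RInt_correct_R, ex_RInt_phi.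
    + intros y1 y2 H1 H2. apply is_RInt_unique_R in H1, H2. congruence.
  - intros eps. pose proof (cond_pos eps).
    exists (fun ab => fst ab < Rmin x (ln eps) /\ snd ab = x). split.
    + apply (Filter_prod _ _ _ (fun a => a < Rmin x (ln eps)) (fun b => b = x)).
      * exists (Rmin x (ln eps)). auto.
      * reflexivity.
      * simpl. auto.
    + intros [a1 b1] [a2 b2] [H1 E1] [H2 E2] u v Hu Hv. simpl in *. subst.
      apply is_RInt_unique_R in Hu, Hv. subst.
      apply Rle_lt_trans with (exp (Rmax a1 a2)).
      * apply Rabs_RInt_phi_le; eapply Rlt_le_trans; eauto; apply Rmin_l.
      * rewrite <- (exp_ln eps) by auto. apply exp_increasing.
        apply Rmax_lub_lt; eapply Rlt_le_trans; eauto; apply Rmin_r.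
Qed.

Lemma is_RInt_gen_Phi x : is_RInt_gen phi (Rbar_locally m_infty) (at_point x) (Phi x).
Proof. apply (RInt_gen_correct (V := R_CompleteNormedModule)), ex_RInt_gen_phi. Qed.

Lemma Phi_Chasles x : Phi x = Phi 0 + RInt phi 0 x.
Proof.
  apply (is_RInt_gen_unique (V := R_CompleteNormedModule)).
  apply (is_RInt_gen_Chasles phi 0); [apply is_RInt_gen_Phi|].
  apply is_RInt_gen_at_point, RInt_correct_R, ex_RInt_phi.
Qed.

Lemma is_derive_Phi x : is_derive Phi x (phi x).
Proof.
  apply (is_derive_ext (fun y => Phi 0 + RInt phi 0 y)); [intros; symmetry; apply Phi_Chasles|].
  replace (phi x) with (0 + phi x) by ring.
  apply (is_derive_plus (fun _ => Phi 0) (fun y => RInt phi 0 y)).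
  - exact (@is_derive_const R_AbsRing R_NormedModule (Phi 0) x).
  - apply (is_derive_RInt phi (fun y => RInt phi 0 y) 0 x); [|apply continuous_phi].
    apply filter_forall. intros; apply RInt_correct_R, ex_RInt_phi.
Qed.

Lemma continuous_Phi x : continuous Phi x.
Proof. apply (continuous_of_derive Phi phi), is_derive_Phi. Qed.

Lemma is_RInt_gen_exp x : is_RInt_gen exp (Rbar_locally m_infty) (at_point x) (exp x).
Proof.
  replace (exp x) with (exp x - 0) by ring.
  apply (is_RInt_gen_ext (Derive exp)).
  - apply filter_forall. intros ab t _. apply is_derive_unique, is_derive_exp.
  - apply is_RInt_gen_Derive.
    + apply filter_forall. intros ab t _. exists (exp t). apply is_derive_exp.
    + apply filter_forall. intros ab t _.
      apply (continuous_ext exp); [intros; symmetry; apply is_derive_unique, is_derive_exp|].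
      apply continuous_exp.
    + apply is_lim_exp_m.
    + intros P HP. exact (locally_singleton _ _ HP).
Qed.

Lemma Rabs_Phi_le x : Rabs (Phi x) <= exp x.
Proof.
  assert (Hx : filter_prod (Rbar_locally m_infty) (at_point x) (fun ab => fst ab <= snd ab)).
  { apply (Filter_prod _ _ _ (fun a => a < x) (fun b => b = x)); [exists x; auto | reflexivity |].
    simpl; intros; subst; lra. }
  apply (@RInt_gen_norm R_CompleteNormedModule (Rbar_locally m_infty) (at_point x) _ _
           phi exp (Phi x) (exp x)); [exact Hx | | apply is_RInt_gen_Phi | apply is_RInt_gen_exp].
  apply (filter_imp (fun ab => fst ab <= snd ab)); [|exact Hx].
  intros ab _ t _. change (Rabs (phi t) <= exp t).
  rewrite Rabs_pos_eq by (left; apply phi_pos). apply phi_le_exp.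
Qed.

Definition trunc_int (w : R -> R) (a B : R) : R :=
  RInt (fun u => w u * Phi (- (a * u)) * phi u) 0 B.

(** * Integrals against phi by differentiation in the parameter *)

(* The [a]-derivative of the integrand of [trunc_int], see [is_derive_trunc_integrand]. *)
Definition trunc_int_dparam (w : R -> R) (a u : R) : R :=
  - (w u * u) * exp (- (1 + a ^ 2) * u ^ 2 / 2) / (2 * PI).

Section TruncatedIntegral.

Variable w : R -> R.
Hypothesis w_continuous : forall x, continuous w x.

Lemma ex_RInt_trunc_integrand a B : ex_RInt (fun u => w u * Phi (- (a * u)) * phi u) 0 B.
Proof.
  apply ex_RInt_continuous_R. intros z _.
  apply continuous_mult_R; [apply continuous_mult_R|apply continuous_phi]; [apply w_continuous|].
  apply (continuous_comp (fun z => - (a * z)) Phi); [|apply continuous_Phi].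
  apply (continuous_of_derive _ (fun _ => - a)). intros; auto_derive; [easy | ring].
Qed.

Lemma is_derive_trunc_integrand u a :
  is_derive (fun a => w u * Phi (- (a * u)) * phi u) a (trunc_int_dparam w a u).
Proof.
  assert (H : is_derive (fun a => - (a * u)) a (- u)) by (auto_derive; [easy | ring]).
  pose proof (is_derive_comp Phi (fun a => - (a * u)) a _ _ (is_derive_Phi _) H) as HPhi.
  eapply is_derive_ext_val; [exact (is_derive_scal _ a (w u * phi u) _ HPhi)| |].
  - intros t. simpl. ring.
  - change (scal (- u) (phi (- (a * u)))) with (- u * phi (- (a * u))).
    change (@eq R (w u * phi u * (- u * phi (- (a * u)))) (trunc_int_dparam w a u)).
    transitivity (- (w u * u) * (phi (- (a * u)) * phi u)); [ring|].
    rewrite phi_mul_phi. unfold trunc_int_dparam, Rdiv. ring.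
Qed.

Lemma continuity_2d_pt_trunc_int_dparam a u : continuity_2d_pt (trunc_int_dparam w) a u.
Proof.
  unfold trunc_int_dparam, Rdiv.
  apply continuity_2d_pt_mult; [|apply continuity_2d_pt_const].
  apply continuity_2d_pt_mult.
  - apply continuity_2d_pt_opp, continuity_2d_pt_mult; [|apply continuity_2d_pt_id2].
    apply (continuity_1d_2d_pt_comp w (fun _ v => v)); [|apply continuity_2d_pt_id2].
    apply continuity_pt_filterlim, w_continuous.
  - apply (continuity_1d_2d_pt_comp exp (fun a u => - (1 + a ^ 2) * u ^ 2 * / 2));
      [apply derivable_continuous_pt, derivable_pt_exp|].
    apply (continuity_2d_pt_ext (fun a u => - (1 + a * a) * (u * u) * / 2)); [intros; ring|].
    repeat first [apply continuity_2d_pt_mult | apply continuity_2d_pt_plus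
      | apply continuity_2d_pt_opp | apply continuity_2d_pt_id1 | apply continuity_2d_pt_id2
      | apply continuity_2d_pt_const].
Qed.

Lemma is_derive_trunc_int B a :
  is_derive (fun a => trunc_int w a B) a (RInt (trunc_int_dparam w a) 0 B).
Proof.
  unfold trunc_int.
  rewrite <- (RInt_ext (fun u => Derive (fun a => w u * Phi (- (a * u)) * phi u) a))
    by (intros; apply is_derive_unique, is_derive_trunc_integrand).
  apply (is_derive_RInt_param (fun a u => w u * Phi (- (a * u)) * phi u)).
  - apply filter_forall. intros z t _. eexists. apply is_derive_trunc_integrand.
  - intros t _. apply (continuity_2d_pt_ext (trunc_int_dparam w));
      [intros; symmetry; apply is_derive_unique, is_derive_trunc_integrand|].
    apply continuity_2d_pt_trunc_int_dparam.
  - apply filter_forall. intros; apply ex_RInt_trunc_integrand.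
Qed.

Lemma continuous_trunc_int_dparam a u : continuous (trunc_int_dparam w a) u.
Proof.
  unfold trunc_int_dparam, Rdiv.
  apply continuous_mult_R; [|apply continuous_const].
  apply continuous_mult_R.
  - apply (continuous_ext (fun u => (-1) * (w u * u))); [intros; simpl; ring|].
    apply continuous_mult_R; [apply continuous_const|].
    apply continuous_mult_R; [apply w_continuous | apply continuous_id].
  - apply continuous_exp_comp, (continuous_of_derive _ (fun u => - (1 + a ^ 2) * u)).
    intros; auto_derive; [easy | field].
Qed.

(* On [0, B] the factor [Phi (- B u)] is at most [exp (- B u)], whose integral is [<= 1 / B]. *)
Lemma Rabs_trunc_int_diag B : 0 < B ->
  (forall u, 0 <= u -> Rabs (w u * phi u) <= 1) -> Rabs (trunc_int w B B) <= 1 / B.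
Proof.
  intros HB Hwphi.
  set (g := fun u => exp (- (B * u))).
  assert (Hg : forall t, continuous g t).
  { intros t. apply continuous_exp_comp, (continuous_of_derive _ (fun _ => - B)).
    intros; auto_derive; [easy | ring]. }
  assert (Eg : RInt g 0 B = (1 - exp (- (B * B))) / B).
  { rewrite (RInt_derive_R (fun u => - exp (- (B * u)) / B)); auto.
    - replace (- (B * 0)) with 0 by ring. rewrite exp_0. as_R_eq. field. lra.
    - intros t. unfold g. auto_derive; [easy | field; lra]. }
  assert (Hexg : ex_RInt g 0 B) by (apply ex_RInt_continuous_R; auto).
  assert (Hpt : forall u, 0 < u < B -> Rabs (w u * Phi (- (B * u)) * phi u) <= g u).
  { intros u Hu. replace (w u * Phi (- (B * u)) * phi u) with ((w u * phi u) * Phi (- (B * u)))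
      by ring.
    rewrite Rabs_mult. pose proof (Hwphi u ltac:(lra)). pose proof (Rabs_Phi_le (- (B * u))).
    pose proof (Rabs_pos (w u * phi u)). pose proof (Rabs_pos (Phi (- (B * u)))). unfold g. nra. }
  assert (Hup : trunc_int w B B <= RInt g 0 B).
  { apply RInt_le; auto using ex_RInt_trunc_integrand; [lra|].
    intros u Hu. apply Hpt, Rabs_le_between in Hu. lra. }
  assert (Hlo : RInt (fun u => - g u) 0 B <= trunc_int w B B).
  { apply RInt_le; auto using ex_RInt_trunc_integrand;
      [lra | apply ex_RInt_opp in Hexg; exact Hexg |].
    intros u Hu. apply Hpt, Rabs_le_between in Hu. lra. }
  rewrite (RInt_opp (V := R_CompleteNormedModule)) in Hlo by auto.
  change (opp (RInt g 0 B)) with (- RInt g 0 B) in Hlo.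
  assert (HI : 0 <= RInt g 0 B <= 1 / B).
  { rewrite Eg. pose proof (exp_pos (- (B * B))).
    assert (exp (- (B * B)) <= 1) by (rewrite <- exp_0; apply exp_le_compat; nra).
    split; [apply Rdiv_le_0_compat | apply Rmult_le_compat_r;
      [left; apply Rinv_0_lt_compat |]]; lra. }
  apply Rabs_le. lra.
Qed.

End TruncatedIntegral.

Lemma RInt_trunc_int_dparam_one a B : RInt (trunc_int_dparam (fun _ => 1) a) 0 B =
  (exp (- (1 + a ^ 2) * B ^ 2 / 2) - 1) / ((1 + a ^ 2) * (2 * PI)).
Proof.
  assert (0 < 1 + a ^ 2) by nra. pose proof PI_RGT_0.
  rewrite (RInt_derive_R (fun u => exp (- (1 + a ^ 2) * u ^ 2 / 2) / ((1 + a ^ 2) * (2 * PI)))).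
  - replace (- (1 + a ^ 2) * 0 ^ 2 / 2) with 0 by field. rewrite exp_0. as_R_eq. field. lra.
  - intros t. unfold trunc_int_dparam.
    auto_derive; [easy | as_R_eq; simpl; unfold Rdiv; field; repeat split; nra].
  - apply continuous_trunc_int_dparam. intros; apply continuous_const.
Qed.

Lemma continuous_pow2 x : continuous (fun v => v ^ 2) x.
Proof. apply (continuous_of_derive _ (fun u => 2 * u)). intros; auto_derive; [easy | ring]. Qed.

Lemma RInt_trunc_int_dparam_pow2 a B : RInt (trunc_int_dparam (fun u => u ^ 2) a) 0 B =
  ((B ^ 2 / (1 + a ^ 2) + 2 / (1 + a ^ 2) ^ 2) * exp (- (1 + a ^ 2) * B ^ 2 / 2)
    - 2 / (1 + a ^ 2) ^ 2) / (2 * PI).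
Proof.
  assert (0 < 1 + a ^ 2) by nra. pose proof PI_RGT_0.
  rewrite (RInt_derive_R (fun u => (u ^ 2 / (1 + a ^ 2) + 2 / (1 + a ^ 2) ^ 2)
                                  * exp (- (1 + a ^ 2) * u ^ 2 / 2) / (2 * PI))).
  - replace (- (1 + a ^ 2) * 0 ^ 2 / 2) with 0 by field. rewrite exp_0. as_R_eq. field. lra.
  - intros t. unfold trunc_int_dparam.
    auto_derive; [easy | as_R_eq; simpl; unfold Rdiv; field; repeat split; nra].
  - apply continuous_trunc_int_dparam, continuous_pow2.
Qed.

Lemma is_RInt_gen_of_rate (f : R -> R) L C B0 : 0 < B0 ->
  (forall B, B0 <= B -> ex_RInt f 0 B) ->
  (forall B, B0 <= B -> Rabs (RInt f 0 B - L) <= C / B) ->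
  is_RInt_gen f (at_point 0) (Rbar_locally p_infty) L.
Proof.
  intros HB0 Hex Hrate P [eps HP]. pose proof (cond_pos eps).
  set (B1 := B0 + Rabs C / eps).
  assert (0 <= Rabs C / eps) by (apply Rdiv_le_0_compat; [apply Rabs_pos | lra]).
  apply (Filter_prod _ _ _ (fun a => a = 0) (fun b => B1 < b)); [reflexivity | exists B1; auto|].
  intros a b -> Hb. simpl. unfold B1 in Hb.
  exists (RInt f 0 b). split; [apply RInt_correct_R, Hex; lra|].
  apply HP. change (Rabs (RInt f 0 b - L) < eps).
  apply Rle_lt_trans with (C / b); [apply Hrate; lra|].
  apply Rle_lt_trans with (Rabs C / b).
  - apply Rmult_le_compat_r; [left; apply Rinv_0_lt_compat; lra | apply RRle_abs].
  - apply Rlt_div_l; [lra|].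
    assert (Rabs C = Rabs C / eps * eps) by (field; lra). nra.
Qed.

(* Compare the parameter [a] with the truncation point [B], where [trunc_int w B B = O(1/B)]. *)
Section TailByParameter.

Variables (w F M : R -> R) (D : R -> R -> R) (c C1 C2 : R).
Hypothesis w_continuous : forall x, continuous w x.
Hypothesis w_phi_le_1 : forall u, 0 <= u -> Rabs (w u * phi u) <= 1.
Hypothesis is_derive_shifted : forall B t, is_derive (fun t => trunc_int w t B + F t) t (D B t).
Hypothesis D_le_M : forall B t, 0 < B -> Rabs (D B t) <= M B.
Hypothesis M_rate : forall B, 0 < B -> B * M B <= C1 / B.
Hypothesis F_rate : forall B, 0 < B -> Rabs (F B - c) <= C2 / B.

Lemma trunc_int_rate a B : 0 < a < B ->
  Rabs (trunc_int w a B - (c - F a)) <= (1 + C1 + C2) / B.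
Proof.
  intros Ha.
  destruct (MVT_derive (fun t => trunc_int w t B + F t) (D B) a B ltac:(lra)
              (is_derive_shifted B)) as [t [_ Et]].
  pose proof (Rabs_trunc_int_diag w w_continuous B ltac:(lra) w_phi_le_1).
  pose proof (F_rate B ltac:(lra)). pose proof (M_rate B ltac:(lra)).
  pose proof (D_le_M B t ltac:(lra)).
  assert (Hdiff : Rabs (D B t * (B - a)) <= C1 / B).
  { rewrite Rabs_mult, (Rabs_pos_eq (B - a)) by lra.
    pose proof (Rabs_pos (D B t)). nra. }
  replace (trunc_int w a B - (c - F a))
    with (trunc_int w B B + (F B - c) - D B t * (B - a)) by lra.
  unfold Rminus at 1. eapply Rle_trans; [apply Rabs_triang|].
  rewrite Rabs_Ropp. eapply Rle_trans; [apply Rplus_le_compat_r, Rabs_triang|].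
  replace ((1 + C1 + C2) / B) with (1 / B + C2 / B + C1 / B) by (field; lra). lra.
Qed.

Lemma is_RInt_gen_trunc_integrand a : 0 < a ->
  is_RInt_gen (fun u => w u * Phi (- (a * u)) * phi u) (at_point 0) (Rbar_locally p_infty)
    (c - F a).
Proof.
  intros Ha. apply (is_RInt_gen_of_rate _ _ (1 + C1 + C2) (a + 1)); [lra| |].
  - intros; apply ex_RInt_trunc_integrand, w_continuous.
  - intros B HB. apply trunc_int_rate. lra.
Qed.

End TailByParameter.

Lemma exp_gauss_le B c : exp (- (1 + c ^ 2) * B ^ 2 / 2) <= exp (- B ^ 2 / 2).
Proof. apply exp_le_compat. pose proof (pow2_ge_0 c). pose proof (pow2_ge_0 B). nra. Qed.

Lemma mul_exp_gauss_le B : 0 < B -> B * exp (- B ^ 2 / 2) <= 2 / B.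
Proof.
  intros HB. pose proof (pow2_exp_le B).
  replace (B * exp (- B ^ 2 / 2)) with (B ^ 2 * exp (- B ^ 2 / 2) / B) by (field; lra).
  apply Rmult_le_compat_r; [left; apply Rinv_0_lt_compat|]; lra.
Qed.

(* [(1 + B^2/6)^3 <= exp (B^2/2)] dominates the quartic [B^2 (B^2 + 2) / 12]. *)
Lemma mul_pow3_exp_gauss_le B : 0 < B -> B * (B ^ 2 + 2) * exp (- B ^ 2 / 2) <= 12 / B.
Proof.
  intros HB. pose proof (exp_ineq1_le (B ^ 2 / 6)). pose proof (pow2_ge_0 B).
  assert (Hc : (1 + B ^ 2 / 6) ^ 3 <= exp (B ^ 2 / 2)).
  { replace (exp (B ^ 2 / 2)) with (exp (B ^ 2 / 6) * exp (B ^ 2 / 6) * exp (B ^ 2 / 6))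
      by (rewrite <- !exp_plus; f_equal; field).
    replace ((1 + B ^ 2 / 6) ^ 3) with ((1 + B ^ 2 / 6) * (1 + B ^ 2 / 6) * (1 + B ^ 2 / 6))
      by ring.
    apply Rmult_le_compat; nra. }
  assert (E : exp (- B ^ 2 / 2) * exp (B ^ 2 / 2) = 1).
  { rewrite <- exp_plus, <- exp_0. f_equal. field. }
  pose proof (exp_pos (- B ^ 2 / 2)).
  assert (B ^ 2 * (B ^ 2 + 2) * exp (- B ^ 2 / 2) <= 12) by nra.
  replace (B * (B ^ 2 + 2) * exp (- B ^ 2 / 2))
    with (B ^ 2 * (B ^ 2 + 2) * exp (- B ^ 2 / 2) / B) by (field; lra).
  apply Rmult_le_compat_r; [left; apply Rinv_0_lt_compat|]; lra.
Qed.

Lemma atan_tail_bounds B : 0 < B -> 0 <= PI / 2 - atan B <= / B.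
Proof.
  intros HB. rewrite <- atan_inv by auto. pose proof (Rinv_0_lt_compat B HB).
  split.
  - rewrite <- atan_0. left. apply atan_increasing. auto.
  - pose proof (atan_le_taylor_even 0 (/ B) ltac:(lra)). simpl in *. lra.
Qed.

Lemma is_derive_trunc_int_one_shifted B t :
  is_derive (fun t => trunc_int (fun _ => 1) t B + atan t / (2 * PI)) t
    (exp (- (1 + t ^ 2) * B ^ 2 / 2) / ((1 + t ^ 2) * (2 * PI))).
Proof.
  assert (0 < 1 + t ^ 2) by nra. pose proof PI_RGT_0.
  pose proof (is_derive_trunc_int _ (fun x => continuous_const 1 x) B t) as H1.
  rewrite RInt_trunc_int_dparam_one in H1.
  pose proof (is_derive_scal _ t (/ (2 * PI)) _ (is_derive_atan_pow2 t)) as H2.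
  eapply is_derive_ext_val; [exact (is_derive_plus _ _ _ _ _ H1 H2)| |].
  - intros x. unfold plus. simpl. as_R_eq. field. lra.
  - unfold plus. simpl. as_R_eq. field. lra.
Qed.

Lemma is_derive_trunc_int_pow2_shifted B t :
  is_derive (fun t => trunc_int (fun u => u ^ 2) t B + (atan t + t / (1 + t ^ 2)) / (2 * PI)) t
    ((B ^ 2 / (1 + t ^ 2) + 2 / (1 + t ^ 2) ^ 2) * exp (- (1 + t ^ 2) * B ^ 2 / 2) / (2 * PI)).
Proof.
  assert (0 < 1 + t ^ 2) by nra. pose proof PI_RGT_0.
  pose proof (is_derive_trunc_int _ continuous_pow2 B t) as H1.
  rewrite RInt_trunc_int_dparam_pow2 in H1.
  assert (H2 : is_derive (fun t => t / (1 + t ^ 2)) t ((1 - t ^ 2) / (1 + t ^ 2) ^ 2)).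
  { auto_derive; [nra | as_R_eq; simpl; unfold Rdiv; field; lra]. }
  pose proof (is_derive_scal _ t (/ (2 * PI)) _
                (is_derive_plus _ _ _ _ _ (is_derive_atan_pow2 t) H2)) as H3.
  eapply is_derive_ext_val; [exact (is_derive_plus _ _ _ _ _ H1 H3)| |].
  - intros x. assert (0 < 1 + x ^ 2) by nra. unfold plus. simpl. as_R_eq. field. lra.
  - unfold plus. simpl. as_R_eq. field. lra.
Qed.

Lemma Rabs_atan_div_2PI_sub_quarter B : 0 < B -> Rabs (atan B / (2 * PI) - / 4) <= 1 / B.
Proof.
  intros HB. pose proof PI_bounds. pose proof (atan_tail_bounds B HB).
  replace (atan B / (2 * PI) - / 4) with (- ((PI / 2 - atan B) / (2 * PI))) by (field; lra).
  rewrite Rabs_Ropp, Rabs_pos_eq by (apply Rdiv_le_0_compat; lra).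
  apply Rle_div_l; [lra|]. replace (1 / B * (2 * PI)) with (/ B * (2 * PI)) by (field; lra).
  pose proof (Rinv_0_lt_compat B HB). nra.
Qed.

Lemma Rabs_atan_add_div_2PI_sub_quarter B : 0 < B ->
  Rabs ((atan B + B / (1 + B ^ 2)) / (2 * PI) - / 4) <= 1 / B.
Proof.
  intros HB. pose proof PI_bounds. pose proof (atan_tail_bounds B HB).
  assert (0 < 1 + B ^ 2) by nra.
  assert (Hb : 0 <= B / (1 + B ^ 2) <= / B).
  { split; [apply Rdiv_le_0_compat; lra | apply Rle_div_l; [lra|]].
    replace (/ B * (1 + B ^ 2)) with (/ B + B) by (field; lra).
    pose proof (Rinv_0_lt_compat B HB). lra. }
  replace ((atan B + B / (1 + B ^ 2)) / (2 * PI) - / 4)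
    with (- ((PI / 2 - atan B - B / (1 + B ^ 2)) / (2 * PI))) by (field; lra).
  rewrite Rabs_Ropp. unfold Rdiv at 1. rewrite Rabs_mult, (Rabs_pos_eq (/ (2 * PI)))
    by (left; apply Rinv_0_lt_compat; lra).
  assert (Rabs (PI / 2 - atan B - B / (1 + B ^ 2)) <= / B) by (apply Rabs_le; lra).
  assert (/ (2 * PI) <= 1) by (rewrite <- Rinv_1; apply Rinv_le_contravar; lra).
  pose proof (Rabs_pos (PI / 2 - atan B - B / (1 + B ^ 2))).
  replace (1 / B) with (/ B) by (field; lra). nra.
Qed.

Lemma is_RInt_gen_Phi_phi a : 0 < a ->
  is_RInt_gen (fun u => 1 * Phi (- (a * u)) * phi u) (at_point 0) (Rbar_locally p_infty)
    (/ 4 - atan a / (2 * PI)).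
Proof.
  pose proof PI_bounds.
  apply (is_RInt_gen_trunc_integrand _ (fun t => atan t / (2 * PI)) (fun B => exp (- B ^ 2 / 2))
           (fun B t => exp (- (1 + t ^ 2) * B ^ 2 / 2) / ((1 + t ^ 2) * (2 * PI))) _ 2 1).
  - intros; apply continuous_const.
  - intros u _. rewrite Rmult_1_l, Rabs_pos_eq by (left; apply phi_pos). apply phi_le_1.
  - apply is_derive_trunc_int_one_shifted.
  - intros B t HB. assert (0 < 1 + t ^ 2) by nra.
    pose proof (exp_gauss_le B t). pose proof (exp_pos (- (1 + t ^ 2) * B ^ 2 / 2)).
    assert (1 <= (1 + t ^ 2) * (2 * PI)) by nra. pose proof (exp_pos (- B ^ 2 / 2)).
    rewrite Rabs_pos_eq by (apply Rdiv_le_0_compat; nra).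
    apply Rle_div_l; nra.
  - apply mul_exp_gauss_le.
  - apply Rabs_atan_div_2PI_sub_quarter.
Qed.

Lemma is_RInt_gen_pow2_Phi_phi a : 0 < a ->
  is_RInt_gen (fun u => u ^ 2 * Phi (- (a * u)) * phi u) (at_point 0) (Rbar_locally p_infty)
    (/ 4 - (atan a + a / (1 + a ^ 2)) / (2 * PI)).
Proof.
  pose proof PI_bounds.
  apply (is_RInt_gen_trunc_integrand _ (fun t => (atan t + t / (1 + t ^ 2)) / (2 * PI))
           (fun B => (B ^ 2 + 2) * exp (- B ^ 2 / 2))
           (fun B t => (B ^ 2 / (1 + t ^ 2) + 2 / (1 + t ^ 2) ^ 2)
                       * exp (- (1 + t ^ 2) * B ^ 2 / 2) / (2 * PI)) _ 12 1).
  - apply continuous_pow2.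
  - intros u _. rewrite Rabs_pos_eq; [apply pow2_mul_phi_le_1|].
    apply Rmult_le_pos; [apply pow2_ge_0 | left; apply phi_pos].
  - apply is_derive_trunc_int_pow2_shifted.
  - intros B t HB. assert (0 < 1 + t ^ 2) by nra. pose proof (pow2_ge_0 B).
    pose proof (exp_gauss_le B t). pose proof (exp_pos (- (1 + t ^ 2) * B ^ 2 / 2)).
    assert (Hq : 0 <= B ^ 2 / (1 + t ^ 2) + 2 / (1 + t ^ 2) ^ 2 <= B ^ 2 + 2).
    { assert (1 <= (1 + t ^ 2) ^ 2) by nra.
      split; [apply Rplus_le_le_0_compat; apply Rdiv_le_0_compat; nra|].
      apply Rplus_le_compat; apply Rle_div_l; nra. }
    rewrite Rabs_pos_eq by (apply Rdiv_le_0_compat; nra).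
    apply Rle_div_l; [lra|].
    apply Rle_trans with ((B ^ 2 + 2) * exp (- B ^ 2 / 2)); [apply Rmult_le_compat; lra|].
    pose proof (exp_pos (- B ^ 2 / 2)).
    assert (0 <= (B ^ 2 + 2) * exp (- B ^ 2 / 2)) by (apply Rmult_le_pos; lra). nra.
  - intros B HB. rewrite <- Rmult_assoc. apply mul_pow3_exp_gauss_le, HB.
  - apply Rabs_atan_add_div_2PI_sub_quarter.
Qed.

Lemma alpha_acc_closed I xi l : 0 < l * xi * sqrt I ->
  alpha_acc I xi l = 1 - 2 * atan (l * xi * sqrt I / 2) / PI.
Proof.
  intros H. unfold alpha_acc. pose proof PI_RGT_0.
  rewrite (is_RInt_gen_unique (V := R_CompleteNormedModule) _
             (/ 4 - atan (l * xi * sqrt I / 2) / (2 * PI))).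
  - field. lra.
  - apply (is_RInt_gen_ext (fun u => 1 * Phi (- ((l * xi * sqrt I / 2) * u)) * phi u)).
    + apply filter_forall. intros ab u _. as_R_eq. rewrite Rmult_1_l. do 2 f_equal. field.
    + apply is_RInt_gen_Phi_phi. lra.
Qed.

Lemma g_speed_closed I xi l : 0 < l * xi * sqrt I ->
  let a := l * xi * sqrt I / 2 in
  g_speed I xi l = 4 * l ^ 2 * (/ 4 - (atan a + a / (1 + a ^ 2)) / (2 * PI)).
Proof.
  intros H a. unfold g_speed. f_equal.
  apply (is_RInt_gen_unique (V := R_CompleteNormedModule)).
  apply (is_RInt_gen_ext (fun u => u ^ 2 * Phi (- (a * u)) * phi u)).
  - apply filter_forall. intros ab u _. as_R_eq. unfold a. do 3 f_equal. field.
  - apply is_RInt_gen_pow2_Phi_phi. unfold a. lra.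
Qed.

(** * The speed profile and its maximizer *)

Definition speed_profile (a : R) : R := a ^ 2 * (PI / 2 - atan a - a / (1 + a ^ 2)).

Definition speed_profile_dfactor (a : R) : R :=
  PI / 2 - atan a - a / (1 + a ^ 2) - a / (1 + a ^ 2) ^ 2.

Lemma is_derive_speed_profile_dfactor a :
  is_derive speed_profile_dfactor a (- (3 - a ^ 2) / (1 + a ^ 2) ^ 3).
Proof.
  assert (0 < 1 + a ^ 2) by nra.
  assert (Hr : is_derive (fun a => PI / 2 - a / (1 + a ^ 2) - a / (1 + a ^ 2) ^ 2) a
     (- (1 - a ^ 2) / (1 + a ^ 2) ^ 2 - (1 - 3 * a ^ 2) / (1 + a ^ 2) ^ 3)).
  { auto_derive; [repeat split; nra | field; lra]. }
  eapply is_derive_ext_val; [exact (is_derive_minus _ _ _ _ _ Hr (is_derive_atan_pow2 a))| |].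
  - intros t. unfold speed_profile_dfactor, minus, plus, opp. simpl. ring.
  - unfold minus, plus, opp. simpl. field. lra.
Qed.

Lemma is_derive_speed_profile a : is_derive speed_profile a (2 * a * speed_profile_dfactor a).
Proof.
  assert (0 < 1 + a ^ 2) by nra.
  assert (Hr : is_derive (fun a => a ^ 2 * (PI / 2) - a ^ 3 / (1 + a ^ 2)) a
     (2 * a * (PI / 2) - (3 * a ^ 2 * (1 + a ^ 2) - a ^ 3 * (2 * a)) / (1 + a ^ 2) ^ 2)).
  { auto_derive; [repeat split; nra | field; lra]. }
  assert (Ha : is_derive (fun a => a ^ 2 * atan a) a (2 * a * atan a + a ^ 2 / (1 + a ^ 2))).
  { assert (Hp : is_derive (fun a : R => a ^ 2) a (2 * a)) by (auto_derive; [easy | ring]).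
    eapply is_derive_ext_val;
      [exact (is_derive_mult _ _ _ _ _ Hp (is_derive_atan_pow2 a) Rmult_comm)| |].
    - reflexivity.
    - unfold plus, mult. simpl. field. lra. }
  eapply is_derive_ext_val; [exact (is_derive_minus _ _ _ _ _ Hr Ha)| |].
  - intros t. assert (0 < 1 + t ^ 2) by nra.
    unfold speed_profile, minus, plus, opp. simpl. field. lra.
  - unfold speed_profile_dfactor, minus, plus, opp. simpl. field. lra.
Qed.

Lemma speed_profile_dfactor_inv a : 0 < a ->
  let x := / a in
  speed_profile_dfactor a = atan x - x / (1 + x ^ 2) - x ^ 3 / (1 + x ^ 2) ^ 2.
Proof.
  intros Ha x. unfold speed_profile_dfactor, x. rewrite atan_inv by lra.
  assert (0 < 1 + a ^ 2) by nra. field. split; lra.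
Qed.

Lemma speed_profile_dfactor_decreasing a b : 0 <= a < b -> b <= 17 / 10 ->
  speed_profile_dfactor b < speed_profile_dfactor a.
Proof.
  intros Hab Hb.
  destruct (MVT_derive _ _ a b ltac:(lra) is_derive_speed_profile_dfactor) as [c [Hc E]].
  assert (0 < 1 + c ^ 2) by nra.
  assert (0 < (3 - c ^ 2) / (1 + c ^ 2) ^ 3) by (apply Rdiv_lt_0_compat; [nra | apply pow_lt; lra]).
  assert (- (3 - c ^ 2) / (1 + c ^ 2) ^ 3 = - ((3 - c ^ 2) / (1 + c ^ 2) ^ 3)) by (field; lra).
  nra.
Qed.

Lemma speed_profile_dfactor_pos a : 0 < a <= a_lo -> 0 < speed_profile_dfactor a.
Proof.
  intros Ha.
  assert (Hlo : 0 < speed_profile_dfactor a_lo).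
  { rewrite speed_profile_dfactor_inv by (unfold a_lo; lra). apply atan_inv_a_lo. }
  destruct (Req_dec a a_lo) as [->|Hne]; [exact Hlo|].
  pose proof (speed_profile_dfactor_decreasing a a_lo ltac:(lra) ltac:(unfold a_lo; lra)). lra.
Qed.

(* Beyond 1.7 the bound [atan x <= x - x^3/3 + x^5/5] at [x = 1/a] already forces the sign. *)
Lemma speed_profile_dfactor_tail_neg a : 17 / 10 <= a -> speed_profile_dfactor a < 0.
Proof.
  intros Ha. rewrite speed_profile_dfactor_inv by lra. set (x := / a).
  assert (Hx : 0 < x <= 10 / 17).
  { unfold x. split; [apply Rinv_0_lt_compat; lra|].
    replace (10 / 17) with (/ (17 / 10)) by field. apply Rinv_le_contravar; lra. }
  pose proof (atan_le_taylor_even 1 x ltac:(lra)) as Hatan. simpl in Hatan.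
  assert (0 < 1 + x ^ 2) by nra. assert (0 < x ^ 3) by (apply pow_lt; lra).
  assert (Hpoly : x ^ 2 * 15 - 5 * (1 + x ^ 2) ^ 2 + 3 * x ^ 2 * (1 + x ^ 2) ^ 2 < 0).
  { assert (x ^ 2 <= 100 / 289) by nra. set (y := x ^ 2) in *.
    assert (0 <= y) by (unfold y; nra). nra. }
  assert (E : x - x ^ 3 / 3 + x ^ 5 / 5 - x / (1 + x ^ 2) - x ^ 3 / (1 + x ^ 2) ^ 2
     = x ^ 3 * (x ^ 2 * 15 - 5 * (1 + x ^ 2) ^ 2 + 3 * x ^ 2 * (1 + x ^ 2) ^ 2)
       / (15 * (1 + x ^ 2) ^ 2)) by (field; lra).
  assert (x ^ 3 * (x ^ 2 * 15 - 5 * (1 + x ^ 2) ^ 2 + 3 * x ^ 2 * (1 + x ^ 2) ^ 2)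
          / (15 * (1 + x ^ 2) ^ 2) < 0).
  { apply Rdiv_neg_pos; [nra | apply Rmult_lt_0_compat; [lra | apply pow_lt; lra]]. }
  nra.
Qed.

Lemma speed_profile_dfactor_neg a : a_hi <= a -> speed_profile_dfactor a < 0.
Proof.
  intros Ha.
  assert (Hhi : speed_profile_dfactor a_hi < 0).
  { rewrite speed_profile_dfactor_inv by (unfold a_hi; lra). apply atan_inv_a_hi. }
  destruct (Rle_lt_dec a (17 / 10)); [|apply speed_profile_dfactor_tail_neg; lra].
  destruct (Req_dec a a_hi) as [->|Hne]; [exact Hhi|].
  pose proof (speed_profile_dfactor_decreasing a_hi a ltac:(unfold a_hi in *; lra) r). lra.
Qed.

Lemma speed_profile_increasing a b : 0 < a < b -> b <= a_lo -> speed_profile a < speed_profile b.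
Proof.
  intros Hab Hb.
  destruct (MVT_derive _ _ a b ltac:(lra) is_derive_speed_profile) as [c [Hc E]].
  pose proof (speed_profile_dfactor_pos c ltac:(lra)).
  assert (0 < 2 * c * speed_profile_dfactor c * (b - a)) by (repeat apply Rmult_lt_0_compat; lra).
  lra.
Qed.

Lemma speed_profile_decreasing a b : a_hi <= a < b -> speed_profile b < speed_profile a.
Proof.
  intros Hab.
  destruct (MVT_derive _ _ a b ltac:(lra) is_derive_speed_profile) as [c [Hc E]].
  pose proof (speed_profile_dfactor_neg c ltac:(lra)). assert (0 < c) by (unfold a_hi in *; lra).
  assert (0 < 2 * c * - speed_profile_dfactor c * (b - a)) by (repeat apply Rmult_lt_0_compat; lra).
  lra.
Qed.

Lemma speed_profile_has_max :
  exists a, 0 < a /\ forall b, 0 < b -> speed_profile b <= speed_profile a.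
Proof.
  destruct (continuity_ab_maj speed_profile a_lo a_hi ltac:(unfold a_lo, a_hi; lra))
    as [a [Hmax Ha]].
  { intros c _. apply continuity_pt_filterlim.
    exact (continuous_of_derive _ _ c is_derive_speed_profile). }
  exists a. split; [unfold a_lo in *; lra|]. intros b Hb.
  destruct (Rlt_le_dec b a_lo); [|destruct (Rle_lt_dec b a_hi)].
  - pose proof (speed_profile_increasing b a_lo ltac:(lra) ltac:(lra)).
    pose proof (Hmax a_lo ltac:(unfold a_lo, a_hi; lra)). lra.
  - apply Hmax; lra.
  - pose proof (speed_profile_decreasing a_hi b ltac:(lra)).
    pose proof (Hmax a_hi ltac:(unfold a_lo, a_hi; lra)). lra.
Qed.

Lemma speed_profile_argmax_bounds a : 0 < a ->
  (forall b, 0 < b -> speed_profile b <= speed_profile a) -> a_lo <= a <= a_hi.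
Proof.
  intros Ha Hmax. split.
  - destruct (Rlt_le_dec a a_lo); auto.
    pose proof (speed_profile_increasing a a_lo ltac:(lra) ltac:(lra)).
    pose proof (Hmax a_lo ltac:(unfold a_lo; lra)). lra.
  - destruct (Rle_lt_dec a a_hi); auto.
    pose proof (speed_profile_decreasing a_hi a ltac:(lra)).
    pose proof (Hmax a_hi ltac:(unfold a_hi; lra)). lra.
Qed.

Lemma g_speed_profile I xi l : 0 < I -> 0 < xi -> 0 < l ->
  g_speed I xi l = 8 / (PI * (xi * sqrt I) ^ 2) * speed_profile (l * (xi * sqrt I) / 2).
Proof.
  intros HI Hxi Hl. assert (0 < sqrt I) by (apply sqrt_lt_R0; auto).
  assert (0 < xi * sqrt I) by nra. pose proof PI_RGT_0.
  rewrite g_speed_closed by (rewrite Rmult_assoc; nra). unfold speed_profile.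
  replace (l * xi * sqrt I / 2) with (l * (xi * sqrt I) / 2) by field.
  field. repeat split; nra.
Qed.

Lemma is_max_speed_profile I xi l : 0 < I -> 0 < xi -> 0 < l ->
  is_max_speed I xi l <->
  forall b, 0 < b -> speed_profile b <= speed_profile (l * (xi * sqrt I) / 2).
Proof.
  intros HI Hxi Hl. set (s := xi * sqrt I).
  assert (Hs : 0 < s) by (unfold s; pose proof (sqrt_lt_R0 I HI); nra).
  assert (HK : 0 < 8 / (PI * s ^ 2))
    by (pose proof PI_RGT_0;
        apply Rdiv_lt_0_compat; [lra | apply Rmult_lt_0_compat, pow_lt; lra]).
  assert (Hpos : forall b, 0 < b -> 0 < 2 * b / s) by (intros; apply Rdiv_lt_0_compat; lra).
  assert (Hb : forall b, 2 * b / s * s / 2 = b) by (intros; field; lra).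
  split.
  - intros [_ Hmax] b Hb0. specialize (Hmax (2 * b / s) (Hpos b Hb0)).
    rewrite !g_speed_profile, Hb in Hmax by auto. fold s in Hmax.
    apply Rmult_le_reg_l in Hmax; auto.
  - intros Hmax. split; [exact Hl|]. intros l' Hl'.
    rewrite !g_speed_profile by auto. fold s.
    apply Rmult_le_compat_l; [lra|]. apply Hmax. apply Rdiv_lt_0_compat; nra.
Qed.

Lemma atan_le_compat x y : x <= y -> atan x <= atan y.
Proof. intros [H| ->]; [left; apply atan_increasing; auto | lra]. Qed.

Lemma acceptance_at_argmax a : a_lo <= a <= a_hi ->
  Rabs (1 - 2 * atan a / PI - 439 / 1000) <= 5 / 10000.
Proof.
  intros Ha. unfold a_lo, a_hi in Ha.
  assert (Hpos : 0 < a) by lra.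
  pose proof atan_inv_a_lo as [Hlo _]. pose proof atan_inv_a_hi as [Hhi _].
  assert (Hinv : / a_hi <= / a <= / a_lo)
    by (unfold a_lo, a_hi; split; apply Rinv_le_contravar; lra).
  assert (Hatan : atan (/ a_hi) <= atan (/ a) <= atan (/ a_lo))
    by (split; apply atan_le_compat; lra).
  rewrite (atan_inv a) in Hatan by lra. pose proof PI_bounds.
  set (t := atan a) in *.
  set (q := 1 - 2 * t / PI).
  assert (Eq : q * PI = 2 * (PI / 2 - t)) by (unfold q; field; lra).
  apply Rabs_le. split; nra.
Qed.

Theorem corollary3 (I xi : R) (hI : 0 < I) (hxi : 0 < xi) :
  (exists lopt, is_max_speed I xi lopt) /\
  (forall lopt, is_max_speed I xi lopt ->
     Rabs (lopt * xi * sqrt I - 2426 / 1000) <= 5 / 10000 /\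
     Rabs (alpha_acc I xi lopt - 439 / 1000) <= 5 / 10000).
Proof.
  set (s := xi * sqrt I).
  assert (Hs : 0 < s) by (unfold s; pose proof (sqrt_lt_R0 I hI); nra).
  split.
  - destruct speed_profile_has_max as [a [Ha Hmax]].
    assert (Hl : 0 < 2 * a / s) by (apply Rdiv_lt_0_compat; lra).
    exists (2 * a / s). apply is_max_speed_profile; auto. fold s.
    replace (2 * a / s * s / 2) with a by (field; lra). exact Hmax.
  - intros l Hmax. assert (Hl : 0 < l) by apply Hmax.
    rewrite (is_max_speed_profile I xi l hI hxi Hl) in Hmax. fold s in Hmax.
    assert (Ha : 0 < l * s / 2) by nra.
    pose proof (speed_profile_argmax_bounds _ Ha Hmax) as Hbounds.
    assert (E : l * xi * sqrt I = 2 * (l * s / 2)) by (unfold s; field).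
    split.
    + rewrite E. unfold a_lo, a_hi in Hbounds. apply Rabs_le. lra.
    + rewrite alpha_acc_closed, E by (rewrite E; lra).
      replace (2 * (l * s / 2) / 2) with (l * s / 2) by field.
      apply acceptance_at_argmax, Hbounds.
Qed.
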